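(* Consider a resource theory with a class $\mathbb{O}$ of free operations, and let $\mathfrak{R}$ be a nonnegative function on states that is monotone ($\mathfrak{R}(\Lambda(\omega))\le\mathfrak{R}(\omega)$ for all $\Lambda\in\mathbb{O}$), tensor-product additive ($\mathfrak{R}(\omega\otimes\omega')=\mathfrak{R}(\omega)+\mathfrak{R}(\omega')$) and superadditive ($\mathfrak{R}(\tau)\ge\mathfrak{R}(\mathrm{Tr}_B\tau)+\mathfrak{R}(\mathrm{Tr}_A\tau)$ for every state $\tau$ on $AB$). Then for all states $\rho,\rho'$ and every $r<\tilde R^0(\rho\to\rho')$, one has $\mathfrak{R}(\rho)\ge r\,\mathfrak{R}(\rho')$; i.e., $\mathfrak{R}(\rho)\ge\tilde R^0(\rho\to\rho')\,\mathfrak{R}(\rho')$.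
   Context: $\tilde R^0(\rho\to\rho')=\limsup_{n\to\infty}\sup\{r:\exists\Lambda_n\in\mathbb{O},\ \Lambda_n:S^{\otimes n}\to S'^{\otimes\lfloor rn\rfloor},\ \mathrm{Tr}_{\setminus i}\Lambda_n(\rho^{\otimes n})=\rho'\ \forall i\}$, where $\mathrm{Tr}_{\setminus i}$ is the reduced state on the $i$-th output copy. *)

From HB Require Import structures.
From mathcomp Require Import all_boot all_order all_algebra.
From mathcomp Require Import all_classical all_reals.
From mathcomp Require Import ereal topology normedtype sequences.
From mathcomp Require complex mxtens.
Import complex.

Set Implicit Arguments.
Unset Strict Implicit.
Unset Printing Implicit Defensive.

Import Order.TTheory GRing.Theory Num.Theory.
Local Open Scope ring_scope.

Notation Cplx R := (complex.complex R).


Section Quantum.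
Variable R : realType.
Local Notation C := (Cplx R).

(* quantum states (density matrices) on a d-dimensional system:
   positive semidefinite (hence Hermitian) with unit trace *)
Definition density (d : nat) (A : 'M[C]_d) : Prop :=
  (forall v : 'cV[C]_d, 0 <= (((map_mx Num.conj v)^T *m A *m v) 0 0)) /\
  \tr A = 1.

Definition ptrB (m n : nat) (T : 'M[C]_(m * n)) : 'M[C]_m :=
  \matrix_(i, j) \sum_(k < n) T (mxtens.mxtens_index (i, k))
                                 (mxtens.mxtens_index (j, k)).
Definition ptrA (m n : nat) (T : 'M[C]_(m * n)) : 'M[C]_n :=
  \matrix_(i, j) \sum_(k < m) T (mxtens.mxtens_index (k, i))
                                 (mxtens.mxtens_index (k, j)).
End Quantum.

(* n copies of a d-dimensional system: index k : 'I_(d^n) is written in base d,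
   the j-th digit (k %/ d^j) %% d being the index of the j-th copy. *)
Lemma digit_proof (d n : nat) (k : 'I_(d ^ n)) (j : 'I_n) :
  ((k %/ d ^ j) %% d < d)%N.
Proof.
case: d k => [|d] k; last by rewrite ltn_mod.
case: n k j => [|n] k [j Hj]; first by [].
by case: k; rewrite exp0n.
Qed.

Definition digit (d n : nat) (k : 'I_(d ^ n)) (j : 'I_n) : 'I_d :=
  @Ordinal d ((k %/ d ^ j) %% d)%N (digit_proof k j).

Section Copies.
Variable R : realType.
Local Notation C := (Cplx R).

Definition tpow (d n : nat) (A : 'M[C]_d) : 'M[C]_(d ^ n) :=
  \matrix_(k, l) \prod_(j < n) A (digit k j) (digit l j).

(* Tr_{\ i} X : reduced state on the i-th copy of X on n copies *)
Definition marg (d n : nat) (i : 'I_n) (X : 'M[C]_(d ^ n)) : 'M[C]_d :=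
  \matrix_(a, b) \sum_(k < d ^ n) \sum_(l < d ^ n)
     (if [&& digit k i == a, digit l i == b &
            [forall j : 'I_n, (j != i) ==> (digit k j == digit l j)]]
      then X k l else 0).

Definition opclass := forall m n : nat, ('M[C]_m -> 'M[C]_n) -> Prop.

Definition achievable (O : opclass) (d d' : nat) (rho : 'M[C]_d)
  (rho' : 'M[C]_d') (n : nat) (r : R) : Prop :=
  exists Lam : 'M[C]_(d ^ n) -> 'M[C]_(d' ^ (Num.truncn (r * n%:R))),
    O _ _ Lam /\ forall i, marg i (Lam (tpow n rho)) = rho'.

Definition R0tilde (O : opclass) (d d' : nat) (rho : 'M[C]_d)
  (rho' : 'M[C]_d') : \bar R :=
  limn_esup (fun n => ereal_sup
    [set (r%:E)%E | r in [set r : R | 0 <= r /\ achievable O rho rho' n r]]).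
End Copies.

(* Additivity gives R(rho^(x)n) = n R(rho).  A free map achieving rate r sends rho^(x)n to a
   state on floor(r n) copies whose one-copy marginals all equal rho'; splitting off one copy
   at a time, superadditivity bounds its resource below by floor(r n) R(rho'), so monotonicity
   gives floor(r n) R(rho') <= n R(rho).  Dividing by n along the infinitely many n at which
   rates above r are achievable yields r R(rho') <= R(rho).  That tensor products of states are
   states rests on positivity of A (x) B for positive A, B, which comes from the spectral
   theorem. *)

From HB Require Import structures.
From mathcomp Require Import all_boot all_order all_algebra.
From mathcomp Require Import all_classical all_reals.
From mathcomp Require Import ereal topology normedtype sequences.
From mathcomp Require complex mxtens.
From mathcomp Require Import sesquilinear spectral ring lra.
Import complex.
Import Order.TTheory GRing.Theory Num.Theory.
Local Open Scope ring_scope.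
Set Implicit Arguments.
Unset Strict Implicit.
Unset Printing Implicit Defensive.

Lemma big_mxtens_index (V : nmodType) m n (F : 'I_(m * n) -> V) :
  \sum_k F k = \sum_i \sum_a F (mxtens.mxtens_index (i, a)).
Proof.
rewrite pair_big /=; apply: reindex => /=.
exists (@mxtens.mxtens_unindex m n) => [[i a]|k] _ /=.
  by rewrite mxtens.mxtens_indexK.
exact: mxtens.mxtens_unindexK.
Qed.

Lemma big_if_eq (V : nmodType) (T : finType) (y : T) (F : T -> V) :
  \sum_x (if x == y then F x else 0) = F y.
Proof. by rewrite -big_mkcond big_pred1_eq. Qed.

Section PsdMatrices.
Variable C : numClosedFieldType.

Definition qform n (A : 'M[C]_n) (v : 'cV[C]_n) : C :=
  ((map_mx Num.conj v)^T *m A *m v) 0 0.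

Definition psdmx n (A : 'M[C]_n) : Prop := forall v, 0 <= qform A v.

Lemma qformE n (A : 'M[C]_n) v :
  qform A v = \sum_i \sum_j (v i 0)^* * A i j * v j 0.
Proof.
rewrite /qform mxE; under eq_bigr do rewrite mxE mulr_suml; rewrite exchange_big.
by apply: eq_bigr => i _; apply: eq_bigr => j _; rewrite !mxE.
Qed.

Lemma real_quadratic_conj (a x y b : C) :
  (forall c, a + c * x + c^* * y + c^* * c * b \is Num.real) -> y = x^*.
Proof.
move=> hr; pose f c := a + c * x + c^* * y + c^* * c * b.
have conjN1 : (-1 : C)^* = -1 by rewrite rmorphN1.
have b_real : b \is Num.real.
  have -> : b = (f 1 + f (-1) - f 0 *+ 2) / 2.
    by rewrite /f conjN1 conjC1 conjC0; field.
  rewrite rpredM ?rpredV ?rpred_nat ?(rpredB (rpredD (hr 1) (hr (-1)))) //.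
  by rewrite rpredMn //; exact: hr.
have lin_real c : c * x + c^* * y \is Num.real.
  have -> : c * x + c^* * y = f c - f 0 - c^* * c * b by rewrite /f conjC0; ring.
  rewrite rpredB ?(rpredB (hr c) (hr 0)) // rpredM //.
  by rewrite mulrC -normCK rpredX ?normr_real.
have /CrealP e1 := lin_real 1; have /CrealP e2 := lin_real 'i.
rewrite conjC1 !mul1r rmorphD in e1.
rewrite conjCi rmorphD !rmorphM rmorphN /= conjCi opprK in e2.
have ii : 1 + 'i * 'i = 0 :> C by rewrite -expr2 sqrCi subrr.
(* [ring] does not know ['i * 'i = -1], so the multiple of [1 + 'i * 'i] is explicit. *)
have : (y^* - x) * 2 = ((x^* + y^*) - (x + y))
    - 'i * ((- 'i * x^* + 'i * y^*) - ('i * x + - 'i * y))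
    - (1 + 'i * 'i) * (x^* - y^* + x - y) by ring.
rewrite e1 e2 ii !subrr mul0r mulr0 !subr0 => /eqP.
by rewrite mulf_eq0 pnatr_eq0 orbF subr_eq0 => /eqP <-; rewrite conjCK.
Qed.

Lemma qform_delta n (A : 'M[C]_n) i j (c : C) :
  qform A (delta_mx i 0 + c *: delta_mx j 0) =
  A i i + c * A i j + c^* * A j i + c^* * c * A j j.
Proof.
have entry k l : (delta_mx (0 : 'I_1) k *m A *m delta_mx l (0 : 'I_1)) 0 0 = A k l.
  by rewrite -rowE -colE !mxE.
rewrite /qform map_mxD map_mxZ !map_delta_mx [(_ + _)^T]linearD /=.
rewrite [(_ *: _)^T]linearZ /= !trmx_delta.
by rewrite !mulmxDl !mulmxDr -!scalemxAl -!scalemxAr !(entry, mxE) !addrA mulrA.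
Qed.

Lemma psdmx_hermsym n (A : 'M[C]_n) : psdmx A -> A \is hermsymmx.
Proof.
move=> psdA; apply/is_hermitianmxP; rewrite expr0 scale1r.
apply/matrixP => i j; rewrite !mxE.
apply: (@real_quadratic_conj (A j j) (A j i) _ (A i i)) => c.
by rewrite -qform_delta ger0_real.
Qed.

Lemma psdmx_spectral n (A : 'M[C]_n) : psdmx A ->
  exists (P : 'M[C]_n) (x : 'rV[C]_n), (forall k, 0 <= x 0 k) /\
    forall i j, A i j = \sum_k (P k i)^* * x 0 k * P k j.
Proof.
move=> psdA.
have /orthomx_spectralP eA := hermitian_normalmx (psdmx_hermsym psdA).
set P := spectralmx A in eA; set x := spectral_diag A in eA.
have uP : P \is unitarymx := spectral_unitarymx A.
rewrite invmx_unitary // in eA.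
exists P, x; split=> [k|i j]; last first.
  by rewrite eA !mxE; apply: eq_bigr => k _; rewrite mul_mx_diag !mxE.
pose v : 'cV[C]_n := (P ^t* *m delta_mx k 0)%sesqui.
have := psdA v; rewrite /qform.
have -> : (map_mx Num.conj v)^T = delta_mx 0 k *m P.
  rewrite /v map_mxM trmx_mul.
  have -> : map_mx Num.conj (P ^t*)%sesqui = P^T.
    by apply/matrixP => a b; rewrite !mxE conjCK.
  rewrite trmxK; congr (_ *m _); apply/matrixP => a b; rewrite !mxE.
  by rewrite rmorph_nat andbC.
have PP : P *m (P ^t*)%sesqui = 1%:M by apply/unitarymxP.
rewrite /v eA !mulmxA -(mulmxA (delta_mx 0 k)) PP mulmx1 -(mulmxA _ P) PP mulmx1.
rewrite mul_mx_diag mxE (bigD1 k) //= big1 ?addr0.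
  by rewrite !mxE !eqxx mul1r mulr1.
by move=> a /negbTE hak; rewrite !mxE hak /= ?andbF ?mulr0 ?mul0r.
Qed.

Lemma mulr_conj_sum_sum m (f g : 'I_m -> C) (c d : C) :
  c * ((\sum_i f i)^* * d * \sum_j g j) = \sum_i \sum_j c * (f i)^* * d * g j.
Proof.
rewrite rmorph_sum /= mulr_suml mulr_suml mulr_sumr; apply: eq_bigr => i _.
rewrite mulr_sumr mulr_sumr; apply: eq_bigr => j _; ring.
Qed.

(* With A = P^* diag(x) P, the form of A (x) B at v is a nonnegative combination of forms
   of B. *)
Lemma psdmx_tensmx m n (A : 'M[C]_m) (B : 'M[C]_n) :
  psdmx A -> psdmx B -> psdmx (mxtens.tensmx A B).
Proof.
move=> psdA psdB v.
have [P [x [x_ge0 eA]]] := psdmx_spectral psdA.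
pose w p : 'cV[C]_n := \col_a \sum_i P p i * v (mxtens.mxtens_index (i, a)) 0.
suff -> : qform (mxtens.tensmx A B) v = \sum_p x 0 p * qform B (w p).
  by apply: sumr_ge0 => p _; apply: mulr_ge0.
rewrite qformE big_mxtens_index.
under eq_bigr => i _ do under eq_bigr => a _ do rewrite big_mxtens_index.
under eq_bigr => i _ do under eq_bigr => a _ do under eq_bigr => j _ do
  under eq_bigr => b _ do rewrite mxtens.tensmxE eA mulr_suml mulr_sumr mulr_suml.
under eq_bigr => i _ do under eq_bigr => a _ do under eq_bigr => j _ do
  rewrite exchange_big.
under eq_bigr => i _ do under eq_bigr => a _ do rewrite exchange_big.
under eq_bigr => i _ do rewrite exchange_big.
rewrite exchange_big; apply: eq_bigr => p _.
rewrite qformE mulr_sumr; under [RHS]eq_bigr => a _ do rewrite mulr_sumr.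
under [RHS]eq_bigr => a _ do under eq_bigr => b _ do
  rewrite !mxE mulr_conj_sum_sum.
under [RHS]eq_bigr => a _ do rewrite exchange_big.
rewrite [RHS]exchange_big; apply: eq_bigr => i _; apply: eq_bigr => a _.
rewrite [RHS]exchange_big; apply: eq_bigr => j _; apply: eq_bigr => b _.
by rewrite /=; ring.
Qed.

Lemma mxtrace_tensmx m n (A : 'M[C]_m) (B : 'M[C]_n) :
  \tr (mxtens.tensmx A B) = \tr A * \tr B.
Proof.
rewrite /mxtrace big_mxtens_index mulr_suml; apply: eq_bigr => i _.
by rewrite mulr_sumr; apply: eq_bigr => a _; rewrite mxtens.tensmxE.
Qed.

End PsdMatrices.

Section DensityMatrices.
Variable R : realType.
Local Notation C := (Cplx R).

Lemma density_tensmx m n (A : 'M[C]_m) (B : 'M[C]_n) :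
  density A -> density B -> density (mxtens.tensmx A B).
Proof.
move=> [psdA trA] [psdB trB]; split; first exact: psdmx_tensmx.
by rewrite mxtrace_tensmx trA trB mulr1.
Qed.

Lemma density_ptrB m n (T : 'M[C]_(m * n)) : density T -> density (ptrB T).
Proof.
move=> [psdT trT]; split; last first.
  by rewrite -trT /mxtrace big_mxtens_index; apply: eq_bigr => i _; rewrite mxE.
move=> v; change (0 <= qform (ptrB T) v).
(* u k is v (x) e_k *)
pose u k : 'cV[C]_(m * n) :=
  \col_l (v (mxtens.mxtens_unindex l).1 0 * ((mxtens.mxtens_unindex l).2 == k)%:R).
suff -> : qform (ptrB T) v = \sum_k qform T (u k).
  by apply: sumr_ge0 => k _; apply: psdT.
rewrite qformE.
under eq_bigr => i _ do under eq_bigr => j _ do rewrite mxE mulr_sumr mulr_suml.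
under eq_bigr => i _ do rewrite exchange_big.
rewrite exchange_big; apply: eq_bigr => k _.
rewrite qformE big_mxtens_index; apply: eq_bigr => i _.
symmetry; rewrite (bigD1 k) //= addrC big1 ?add0r; last first.
  move=> a /negbTE ak; apply: big1 => l _; rewrite !mxE mxtens.mxtens_indexK /=.
  by rewrite ak mulr0 rmorph0 !mul0r.
rewrite big_mxtens_index; apply: eq_bigr => j _.
rewrite (bigD1 k) //= addrC big1 ?add0r; last first.
  by move=> b /negbTE bk; rewrite !mxE !mxtens.mxtens_indexK /= bk !mulr0.
by rewrite !mxE !mxtens.mxtens_indexK /= eqxx !mulr1.
Qed.

End DensityMatrices.

Section BaseDigits.
Variable d : nat.

Definition expnSr_cast n : (d ^ n * d = d ^ n.+1)%N := esym (expnSr d n).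

(* Prepends [a] as the least significant digit, i.e. the new copy number 0. *)
Definition cons_index n (q : 'I_(d ^ n)) (a : 'I_d) : 'I_(d ^ n.+1) :=
  cast_ord (expnSr_cast n) (mxtens.mxtens_index (q, a)).

Lemma digit_cons_index0 n q a : digit (@cons_index n q a) ord0 = a.
Proof. by apply: val_inj; rewrite /= expn0 divn1 modnMDl modn_small. Qed.

Lemma digit_cons_indexS n q a j :
  digit (@cons_index n q a) (lift ord0 j) = digit q j.
Proof.
apply: val_inj => /=; have d_gt0 : (0 < d)%N by case: a => a; case: d.
rewrite /bump leq0n add1n expnS divnMA divnMDl //.
by rewrite (divn_small (ltn_ord a)) addn0.
Qed.

Lemma cons_index_inj n q a q' b :
  (@cons_index n q a == cons_index q' b) = ((q, a) == (q', b)).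
Proof.
apply/eqP/eqP => [|[-> ->] //] /(congr1 (cast_ord (esym (expnSr_cast n)))).
rewrite !cast_ordK => /(congr1 (@mxtens.mxtens_unindex _ _)).
by rewrite !mxtens.mxtens_indexK.
Qed.

Lemma cons_indexP n (k : 'I_(d ^ n.+1)) : exists q a, k = @cons_index n q a.
Proof.
set k' := cast_ord (esym (expnSr_cast n)) k.
exists (mxtens.mxtens_unindex k').1, (mxtens.mxtens_unindex k').2.
by rewrite /cons_index -surjective_pairing mxtens.mxtens_unindexK cast_ordKV.
Qed.

Lemma big_cons_index (V : nmodType) n (F : 'I_(d ^ n.+1) -> V) :
  \sum_k F k = \sum_q \sum_a F (@cons_index n q a).
Proof.
rewrite (reindex (cast_ord (expnSr_cast n))) /= ?big_mxtens_index //.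
by exists (cast_ord (esym (expnSr_cast n))) => k _; rewrite (cast_ordK, cast_ordKV).
Qed.

Lemma forall_ordS n (P : 'I_n.+1 -> bool) :
  [forall j, P j] = P ord0 && [forall j : 'I_n, P (lift ord0 j)].
Proof.
apply/forallP/andP => [h|[h0 /forallP h] j]; first by split => //; apply/forallP.
by case: (unliftP ord0 j) => [j' ->|->].
Qed.

Lemma eq_digits n (q q' : 'I_(d ^ n)) :
  [forall j, digit q j == digit q' j] = (q == q').
Proof.
elim: n q q' => [|n IHn] q q'.
  have ord1 (z : 'I_(d ^ 0)) : z = ord0 by apply: val_inj; case: z => [[]].
  by rewrite (ord1 q) (ord1 q') eqxx; apply/forallP => j; rewrite eqxx.
have [q1 [a ->]] := cons_indexP q; have [q1' [b ->]] := cons_indexP q'.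
rewrite forall_ordS !digit_cons_index0 cons_index_inj xpair_eqE andbC -IHn.
by congr (_ && _); apply: eq_forallb => j; rewrite !digit_cons_indexS.
Qed.

End BaseDigits.

Lemma castmx_sq_apply (R : nzRingType) (T : Type) (f : forall n, 'M[R]_n -> T)
    m m' (e : m = m') (X : 'M[R]_m) :
  f m' (castmx (e, e) X) = f m X.
Proof. by case: m' / e; rewrite castmx_id. Qed.

Section TensorPowers.
Variable R : realType.
Local Notation C := (Cplx R).
Variable d : nat.

Lemma tpowS n (rho : 'M[C]_d) :
  tpow n.+1 rho =
  castmx (expnSr_cast d n, expnSr_cast d n) (mxtens.tensmx (tpow n rho) rho).
Proof.
apply/matrixP => k l.
have [q [a ->]] := cons_indexP k; have [q' [b ->]] := cons_indexP l.
rewrite castmxE /= !mxE big_ord_recl !digit_cons_index0 !cast_ordK.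
rewrite !mxtens.mxtens_indexK /= mulrC; congr (_ * _).
by apply: eq_bigr => j _; rewrite !digit_cons_indexS.
Qed.

Lemma density_tpow0 (rho : 'M[C]_d) : density (tpow 0 rho).
Proof.
split; last by rewrite /mxtrace big_ord1 mxE big_ord0.
move=> v; change (0 <= qform (tpow 0 rho) v).
by rewrite qformE !big_ord1 mxE big_ord0 mulr1 mulrC mul_conjC_ge0.
Qed.

Lemma density_tpow n (rho : 'M[C]_d) : density rho -> density (tpow n rho).
Proof.
move=> rho_dens; elim: n => [|n IHn]; first exact: density_tpow0.
by rewrite tpowS (castmx_sq_apply (@density R)); apply: density_tensmx.
Qed.

(* Regroups n+1 copies as (copies 1..n) * (copy 0), the layout of [tensmx]. *)
Definition split_copy n (X : 'M[C]_(d ^ n.+1)) : 'M[C]_(d ^ n * d) :=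
  castmx (esym (expnSr_cast d n), esym (expnSr_cast d n)) X.

Lemma split_copyE n (X : 'M[C]_(d ^ n.+1)) q a q' b :
  split_copy X (mxtens.mxtens_index (q, a)) (mxtens.mxtens_index (q', b)) =
  X (cons_index q a) (cons_index q' b).
Proof. by rewrite castmxE; congr (X _ _); apply: val_inj. Qed.

Lemma split_copyK n (X : 'M[C]_(d ^ n.+1)) :
  castmx (expnSr_cast d n, expnSr_cast d n) (split_copy X) = X.
Proof. by rewrite castmx_comp castmx_id. Qed.

Lemma marg_ord0 n (X : 'M[C]_(d ^ n.+1)) : marg ord0 X = ptrA (split_copy X).
Proof.
apply/matrixP => a b; rewrite !mxE big_cons_index.
under eq_bigr => q _ do under eq_bigr => a1 _ do rewrite big_cons_index.
have select q a1 q' b1 :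
  (if [&& digit (cons_index q a1) ord0 == a, digit (cons_index q' b1) ord0 == b &
     [forall j, (j != ord0) ==>
                (digit (cons_index q a1) j == digit (cons_index q' b1) j)]]
   then X (cons_index q a1) (cons_index q' b1) else 0) =
  if b1 == b then (if q' == q then (if a1 == a then
     X (cons_index q a1) (cons_index q' b1) else 0) else 0) else 0.
  rewrite !digit_cons_index0 forall_ordS /=.
  have -> : [forall j : 'I_n, digit (cons_index q a1) (lift ord0 j) ==
                               digit (cons_index q' b1) (lift ord0 j)] = (q == q').
    by rewrite -eq_digits; apply: eq_forallb => j; rewrite !digit_cons_indexS.
  by rewrite [q' == q]eq_sym; case: (a1 == a); case: (b1 == b); case: (q == q').
under eq_bigr => q _ do under eq_bigr => a1 _ do under eq_bigr => q' _ do
  under eq_bigr => b1 _ do rewrite select.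
under eq_bigr => q _ do under eq_bigr => a1 _ do under eq_bigr => q' _ do
  rewrite big_if_eq.
under eq_bigr => q _ do under eq_bigr => a1 _ do rewrite big_if_eq.
under eq_bigr => q _ do rewrite big_if_eq.
by apply: eq_bigr => q _; rewrite split_copyE.
Qed.

Lemma marg_lift n (i : 'I_n) (X : 'M[C]_(d ^ n.+1)) :
  marg (lift ord0 i) X = marg i (ptrB (split_copy X)).
Proof.
apply/matrixP => a b; rewrite !mxE big_cons_index.
under eq_bigr => q _ do under eq_bigr => a1 _ do rewrite big_cons_index.
pose same_rest (q q' : 'I_(d ^ n)) := [&& digit q i == a, digit q' i == b &
     [forall j, (j != i) ==> (digit q j == digit q' j)]].
have select q a1 q' b1 :
  (if [&& digit (cons_index q a1) (lift ord0 i) == a,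
          digit (cons_index q' b1) (lift ord0 i) == b &
     [forall j, (j != lift ord0 i) ==>
        (digit (cons_index q a1) j == digit (cons_index q' b1) j)]]
   then X (cons_index q a1) (cons_index q' b1) else 0) =
  if same_rest q q' then (if b1 == a1 then X (cons_index q a1) (cons_index q' b1)
                          else 0) else 0.
  rewrite !digit_cons_indexS forall_ordS /= !digit_cons_index0.
  have -> : [forall j : 'I_n, (lift ord0 j != lift ord0 i) ==>
     (digit (cons_index q a1) (lift ord0 j) ==
      digit (cons_index q' b1) (lift ord0 j))] =
     [forall j, (j != i) ==> (digit q j == digit q' j)].
    apply: eq_forallb => j.
    by rewrite (inj_eq (@lift_inj _ ord0)) !digit_cons_indexS.
  rewrite /same_rest [b1 == a1]eq_sym.
  by case: (digit q i == a); case: (digit q' i == b); case: (a1 == b1);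
    case: [forall j, _].
under eq_bigr => q _ do under eq_bigr => a1 _ do under eq_bigr => q' _ do
  under eq_bigr => b1 _ do rewrite select.
apply: eq_bigr => q _; rewrite exchange_big; apply: eq_bigr => q' _.
rewrite /same_rest; case: ifP => _; last by apply: big1 => a1 _; apply: big1.
by rewrite mxE; apply: eq_bigr => c _; rewrite big_if_eq split_copyE.
Qed.

End TensorPowers.

Lemma lt_limn_esup (R : realType) (u : (\bar R)^nat) (x : \bar R) :
  (x < limn_esup u)%E -> forall N, exists2 n, (N <= n)%N & (x < u n)%E.
Proof.
move=> x_lt N.
have le_esups : (limn_esup u <= esups u N)%E.
  rewrite limn_esup_lim (cvg_lim _ (@cvg_esups_inf R u)) //.
  by apply: ge_ereal_inf; exists (esups u N) => //; exists N.
have := lt_le_trans x_lt le_esups; rewrite /esups /=.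
by move=> /ereal_sup_gt [_ [n Nn <-] x_lt_un]; exists n.
Qed.

Lemma ler_of_frequently_natmul (R : archiRealFieldType) (a b c : R) :
  (forall N, exists2 n, (N <= n)%N & n%:R * a <= n%:R * b + c) -> a <= b.
Proof.
move=> freq; rewrite leNgt; apply/negP => lt_ba.
have c_ba_ge0 : 0 <= `|c| / (a - b) by rewrite divr_ge0 // subr_ge0 ltW.
have [n Nn le_n] := freq (Num.truncn (`|c| / (a - b))).+1.
have /andP[_ lt_c] := truncn_itv c_ba_ge0.
rewrite -(ler_nat R) in Nn; move: (lt_le_trans lt_c Nn).
rewrite ltr_pdivrMr ?subr_gt0 // mulrBr => lt_cn.
have := ler_norm c; lra.
Qed.

Lemma lee_mul_EFin (R : realType) (x : \bar R) (a b : R) : 0 <= a -> 0 <= b ->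
  (forall r, (r%:E < x)%E -> r * a <= b) -> (x * a%:E <= b%:E)%E.
Proof.
move=> a_ge0 b_ge0 lt_le; have [->|a_neq0] := eqVneq a 0.
  by rewrite mule0 lee_fin.
have a_gt0 : 0 < a by rewrite lt0r a_neq0.
case: x lt_le => [x| |] lt_le.
- rewrite -EFinM lee_fin; apply/ler_addgt0Pr => e e_gt0.
  have := lt_le (x - e / a); rewrite lte_fin gtrBl divr_gt0 // mulrBl divfK //.
  by move=> /(_ isT); lra.
- by have := lt_le ((b + 1) / a) (ltry _); rewrite divfK ?gt_eqF // => ?; exfalso; lra.
- by rewrite mulNyr gtr0_sg // mul1e leNye.
Qed.

Section ResourceMonotones.
Variable R : realType.
Local Notation C := (Cplx R).
Variable Res : forall d : nat, 'M[C]_d -> R.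
Hypothesis Res_ge0 : forall d (w : 'M[C]_d), density w -> 0 <= Res w.
Hypothesis Res_tensmx : forall m n (w : 'M[C]_m) (w' : 'M[C]_n),
  density w -> density w' -> Res (mxtens.tensmx w w') = Res w + Res w'.
Hypothesis Res_super : forall m n (tau : 'M[C]_(m * n)), density tau ->
  Res (ptrB tau) + Res (ptrA tau) <= Res tau.

Lemma Res_tpow0 d (rho : 'M[C]_d) : Res (tpow 0 rho) = 0.
Proof.
have tpow0_dens := density_tpow0 rho.
have tens_tpow0 : mxtens.tensmx (tpow 0 rho) (tpow 0 rho) = tpow 0 rho :> 'M_(1 * 1).
  by apply/matrixP => k l; rewrite !mxE !big_ord0 mulr1.
have := Res_tensmx tpow0_dens tpow0_dens; rewrite tens_tpow0.
(* identify the indices [1 * 1] and [d ^ 0] for [lra] *)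
change (@Res 1 (tpow 0 rho) = @Res 1 (tpow 0 rho) + @Res 1 (tpow 0 rho) ->
        @Res 1 (tpow 0 rho) = 0).
lra.
Qed.

Lemma Res_tpow d n (rho : 'M[C]_d) :
  density rho -> Res (tpow n rho) = n%:R * Res rho.
Proof.
move=> rho_dens; elim: n => [|n IHn]; first by rewrite Res_tpow0 mul0r.
rewrite tpowS (castmx_sq_apply (@Res)) Res_tensmx ?IHn //; last exact: density_tpow.
by rewrite -nat1r mulrDl mul1r addrC.
Qed.

Lemma Res_ge_marg d' k (X : 'M[C]_(d' ^ k)) (rho' : 'M[C]_d') :
  density X -> (forall i, marg i X = rho') -> k%:R * Res rho' <= Res X.
Proof.
elim: k X => [|k IHk] X X_dens X_marg; first by rewrite mul0r Res_ge0.
rewrite -(split_copyK X) (castmx_sq_apply (@Res)).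
have Y_dens : density (split_copy X).
  by rewrite -(castmx_sq_apply (@density R) (expnSr_cast d' k)) split_copyK.
have := Res_super Y_dens; rewrite -marg_ord0 X_marg.
have : k%:R * Res rho' <= Res (ptrB (split_copy X)).
  by apply: IHk => [|i]; [exact: density_ptrB | rewrite -marg_lift].
rewrite -nat1r mulrDl mul1r; lra.
Qed.

Variable O : opclass R.
Hypothesis O_density : forall m n (Lam : 'M[C]_m -> 'M[C]_n), O Lam ->
  forall w, density w -> density (Lam w).
Hypothesis Res_mono : forall m n (Lam : 'M[C]_m -> 'M[C]_n) (w : 'M[C]_m),
  O Lam -> density w -> Res (Lam w) <= Res w.

Lemma achievable_Res_le d d' (rho : 'M[C]_d) (rho' : 'M[C]_d') n r :
  density rho -> achievable O rho rho' n r ->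
  (Num.truncn (r * n%:R))%:R * Res rho' <= n%:R * Res rho.
Proof.
move=> rho_dens [Lam [O_Lam Lam_marg]].
have tpow_dens := density_tpow n rho_dens.
rewrite -[n%:R * _]Res_tpow //; apply: le_trans _ (Res_mono O_Lam tpow_dens).
exact: Res_ge_marg (O_density O_Lam tpow_dens) Lam_marg.
Qed.

Lemma lt_R0tilde_Res_le d d' (rho : 'M[C]_d) (rho' : 'M[C]_d') r :
  density rho -> density rho' -> (r%:E < R0tilde O rho rho')%E ->
  r * Res rho' <= Res rho.
Proof.
move=> rho_dens rho'_dens /lt_limn_esup lt_sup.
have Res'_ge0 := Res_ge0 rho'_dens.
apply: (@ler_of_frequently_natmul _ _ _ (Res rho')) => N.
have [n Nn /ereal_sup_gt [_ [s [s_ge0 ach] <-]]] := lt_sup N.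
rewrite lte_fin => lt_rs; exists n => //.
have le_trunc := achievable_Res_le rho_dens ach.
have /andP[_ lt_trunc] := truncn_itv (mulr_ge0 s_ge0 (ler0n R n)).
have le_rs : n%:R * (r * Res rho') <= s * n%:R * Res rho'.
  by rewrite mulrCA -mulrA ler_wpM2r ?mulr_ge0 // ltW.
have le_sT : s * n%:R * Res rho' <= ((Num.truncn (s * n%:R))%:R + 1) * Res rho'.
  by rewrite ler_wpM2r // addrC nat1r ltW.
rewrite mulrDl mul1r in le_sT; lra.
Qed.

End ResourceMonotones.

Theorem mainTheorem13 (R : realType) (O : opclass R)
  (Res : forall d : nat, 'M[Cplx R]_d -> R)
  (HOstate : forall m n (Lam : 'M[Cplx R]_m -> 'M[Cplx R]_n), O m n Lam ->
     forall w, density w -> density (Lam w))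
  (Hnonneg : forall d (w : 'M[Cplx R]_d), density w -> 0 <= Res d w)
  (Hmono : forall m n (Lam : 'M[Cplx R]_m -> 'M[Cplx R]_n) (w : 'M[Cplx R]_m),
     O m n Lam -> density w -> Res n (Lam w) <= Res m w)
  (Hadd : forall m n (w : 'M[Cplx R]_m) (w' : 'M[Cplx R]_n),
     density w -> density w' -> Res (m * n)%N (mxtens.tensmx w w') = Res m w + Res n w')
  (Hsuper : forall m n (tau : 'M[Cplx R]_(m * n)), density tau ->
     Res m (ptrB tau) + Res n (ptrA tau) <= Res (m * n)%N tau)
  (d d' : nat) (rho : 'M[Cplx R]_d) (rho' : 'M[Cplx R]_d')
  (Hrho : density rho) (Hrho' : density rho') :
  (forall r : R, (r%:E < R0tilde O rho rho')%E -> r * Res d' rho' <= Res d rho) /\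
  (R0tilde O rho rho' * (Res d' rho')%:E <= (Res d rho)%:E)%E.
Proof.
have rate_bound r : (r%:E < R0tilde O rho rho')%E -> r * Res d' rho' <= Res d rho.
  exact: (lt_R0tilde_Res_le Hnonneg Hadd Hsuper HOstate Hmono Hrho Hrho').
split=> //; apply: lee_mul_EFin rate_bound; exact: Hnonneg.
Qed.
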